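(* Let $d\ge1$, $\Theta\subseteq\mathbb{R}$, and let $g:\Theta\to\mathbb{R}$ be continuously differentiable, one-to-one, with $\mathrm{d}g/\mathrm{d}\theta\neq0$ on $\Theta$, applied entrywise. Let $\boldsymbol{\theta}\in\Theta^d$ be a random vector with marginal distribution $p_{\boldsymbol{\theta}}$, let $\mathbf{x}_0=g(\boldsymbol{\theta})$ with distribution $p_{\mathbf{x}_0}$, and for $t\in[\epsilon,1]$ let $p_{\mathbf{x}_t\mid\mathbf{x}_0}(\cdot\mid\mathbf{x}_0)$ be the density of $\mathcal{N}(\sqrt{\alpha_t}\,\mathbf{x}_0,\,v_t\mathbf{I}_d)$, where $\alpha_t=\exp(-\int_0^t\beta(s)\,\mathrm{d}s)$, $v_t=1-\alpha_t$, $\beta:\mathbb{R}\to\mathbb{R}_+$. Let $\mathbf{T}_{\boldsymbol{\theta}}:\Theta^d\to\mathbb{R}^{k}$ be a measurable function and $\boldsymbol{\zeta}:\mathbb{R}^d\to\mathbb{R}^{k}$ a Lipschitz continuous function. Suppose $$\mathbb{E}_{\boldsymbol{\theta}\sim p_{\boldsymbol{\theta}}}\big[\|\mathbf{T}_{\boldsymbol{\theta}}(\boldsymbol{\theta})\|\big]<\infty,\qquad \mathbb{E}_{\boldsymbol{\theta}\sim p_{\boldsymbol{\theta}}}\big[\|g(\boldsymbol{\theta})\|\,\|\mathbf{T}_{\boldsymbol{\theta}}(\boldsymbol{\theta})\|\big]<\infty.$$ Then for all $t\in[\epsilon,1]$, $$\int p_{\mathbf{x}_0}(\mathbf{x}_0)\int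 p_{\mathbf{x}_t\mid\mathbf{x}_0}(\mathbf{x}_t\mid\mathbf{x}_0)\,\big|\boldsymbol{\zeta}(\mathbf{x}_t)^{\top}\mathbf{T}_{\boldsymbol{\theta}}(g^{-1}(\mathbf{x}_0))\big|\,\mathrm{d}\mathbf{x}_t\,\mathrm{d}\mathbf{x}_0<\infty.$$
   Context: $\|\cdot\|$ is the Euclidean norm and $\epsilon>0$ is a small constant. In the paper, $\mathbf{T}_{\boldsymbol{\theta}}$ is the sufficient statistic (valued in $\mathbb{R}^{2d}$) of the natural conjugate prior of a one-parameter exponential-family likelihood, and $\boldsymbol{\zeta}$ gives the hyperparameters of that prior as a function of $\mathbf{x}_t$. *)

From HB Require Import structures.
From mathcomp Require Import all_boot all_order all_algebra.
From mathcomp Require Import all_classical all_reals all_analysis.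
Set Implicit Arguments. Unset Strict Implicit. Unset Printing Implicit Defensive.
Import Order.TTheory GRing.Theory Num.Theory.
Import numFieldNormedType.Exports.
Local Open Scope classical_set_scope.
Local Open Scope ring_scope.

Section defs.
Variable R : realType.

Definition enorm n (x : n.-tuple R) : R :=
  Num.sqrt (\sum_(i < n) (tnth x i) ^+ 2).

Definition dotp n (a b : n.-tuple R) : R := \sum_(i < n) tnth a i * tnth b i.

Definition emap n (f : R -> R) (x : n.-tuple R) : n.-tuple R := map_tuple f x.

Definition tsub n (x y : n.-tuple R) : n.-tuple R :=
  [tuple tnth x i - tnth y i | i < n].
Definition tscale n (c : R) (x : n.-tuple R) : n.-tuple R := map_tuple ( *%R c) x.

Definition in_pow n (Theta : set R) : set (n.-tuple R) :=
  [set x | forall i : 'I_n, Theta (tnth x i)].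

(* Inverse of g on its image g(Theta): g^{-1}(y) is the (unique, when g is
   injective on Theta) theta in Theta with g theta = y; an arbitrary value (0)
   outside g(Theta). *)
Definition inv_on (Theta : set R) (g : R -> R) (y : R) : R :=
  xget 0 [set th | Theta th /\ g th = y].

Definition lipschitz_fun n m (f : n.-tuple R -> m.-tuple R) : Prop :=
  exists L : R, forall x y, enorm (tsub (f x) (f y)) <= L * enorm (tsub x y).

Definition alpha_t (beta : R -> R) (t : R) : R :=
  expR (- Rintegral (@lebesgue_measure R) `[0, t] beta).
Definition v_t (beta : R -> R) (t : R) : R := 1 - alpha_t beta t.

Definition gauss_pdf n (mu : n.-tuple R) (v : R) (x : n.-tuple R) : R :=
  (Num.sqrt (v * pi *+ 2)) ^- n * expR (- (enorm (tsub x mu)) ^+ 2 / (v *+ 2)).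

(* Lebesgue integral over R^n of a nonnegative function, computed as the
   n-fold iterated one-dimensional Lebesgue integral (equal to the integral
   w.r.t. n-dimensional Lebesgue measure by Tonelli). *)
Fixpoint lebRd (n : nat) : (n.-tuple R -> \bar R) -> \bar R :=
  match n return (n.-tuple R -> \bar R) -> \bar R with
  | 0 => fun f => f [tuple]
  | n'.+1 => fun f =>
      (\int[@lebesgue_measure R]_x lebRd (fun t : n'.-tuple R => f (cons_tuple x t)))%E
  end.

End defs.
Arguments in_pow {R} n Theta.

(* Since zeta is Lipschitz, |zeta(x)^T w| <= k |w| (|zeta(0)| + L |x|), and a Gaussian
   of variance v integrates such linearly growing functions to something affine in
   its mean m = sqrt(alpha_t) x0: bounding |x| by sum_j |x_j - m_j| + sum_j |m_j| and
   1 + sum_j y_j by prod_j (1 + y_j), the integral over x factorizes into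
   one-dimensional integrals of (1 + |u|) exp(-u^2 / 2v), each dominated by a normal
   density of variance 2v.  The inner integral is therefore at most
   (a + b |x0|) |T(g^-1(x0))|, and pulling the outer integral back along g, which
   g^-1 inverts on Theta^d and hence almost surely, bounds it by
   a E|T(theta)| + b E[|g(theta)| |T(theta)|] < oo.  The inner integral need not be
   measurable in x0, so integrals are only compared through their definition as
   suprema over simple functions below the integrand. *)

From HB Require Import structures.
From mathcomp Require Import all_boot all_order all_algebra.
From mathcomp Require Import all_classical all_reals all_analysis.
From mathcomp Require Import measurable_realfun.
From mathcomp Require Import ring lra.
Set Implicit Arguments. Unset Strict Implicit. Unset Printing Implicit Defensive.
Import Order.TTheory GRing.Theory Num.Theory.
Import numFieldNormedType.Exports.
Local Open Scope classical_set_scope.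
Local Open Scope ring_scope.

Section upper_integral.
Local Open Scope ereal_scope.
Context {d} {T : measurableType d} {R : realType} (mu : {measure set T -> \bar R}).
Import HBNNSimple.

Lemma ge0_le_integralT (f g : T -> \bar R) :
  (forall x, 0 <= f x) -> (forall x, f x <= g x) ->
  \int[mu]_x f x <= \int[mu]_x g x.
Proof.
move=> f0 fg; have g0 x : 0 <= g x by exact: le_trans (f0 x) (fg x).
rewrite !ge0_integralTE//; apply: ge_ereal_sup => _ [h hf <-].
by apply: ereal_sup_ubound; exists h => // x; exact: le_trans (hf x) (fg x).
Qed.

Lemma ae_ge0_le_integralT (f g : T -> \bar R) :
  (forall x, 0 <= f x) -> (forall x, 0 <= g x) ->
  {ae mu, forall x, f x <= g x} ->
  \int[mu]_x f x <= \int[mu]_x g x.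
Proof.
move=> f0 g0 [N [mN N0 fgN]].
rewrite [leLHS]ge0_integralTE//; apply: ge_ereal_sup => _ [h hf <-].
have := integral_nnsfun mu measurableT h; rewrite patch_setT => <-.
rewrite [leLHS](@ge0_negligible_integral _ _ _ mu setT N _ mN measurableT)//; last 2 first.
- by apply/measurable_EFinP; exact: measurable_funP.
- by move=> x _; rewrite lee_fin.
rewrite integral_mkcond; apply: ge0_le_integralT => x; rewrite patchE.
  by case: ifP => // _; rewrite lee_fin.
case: ifPn => // /set_mem [_ Nx]; apply: le_trans (hf x) _.
by apply: contrapT => fgx; apply: Nx; exact: fgN.
Qed.

End upper_integral.

Section pushforward_upper_integral.
Local Open Scope ereal_scope.
Context {d1 d2} {X : measurableType d1} {Y : measurableType d2} {R : realType}.
Import HBNNSimple.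

Lemma ge0_integral_pushforward_le (mu : {measure set X -> \bar R}) (phi : X -> Y)
    (f : Y -> \bar R) : measurable_fun setT phi -> (forall y, 0 <= f y) ->
  \int[pushforward mu phi]_y f y <= \int[mu]_x f (phi x).
Proof.
move=> mphi f0; rewrite [leLHS]ge0_integralTE//.
apply: ge_ereal_sup => _ [h hf <-].
have mh : measurable_fun setT (EFin \o h).
  by apply/measurable_EFinP; exact: measurable_funP.
have := integral_nnsfun (pushforward mu phi) measurableT h; rewrite patch_setT => <-.
rewrite ge0_integral_pushforward// ?preimage_setT; last by move=> y _; rewrite lee_fin.
apply: ge0_le_integralT => x; first by rewrite /= lee_fin.
exact: hf.
Qed.

End pushforward_upper_integral.

Section iterated_lebesgue_integral.
Local Open Scope ereal_scope.
Context (R : realType).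

Lemma lebRd_ge0 n (f : n.-tuple R -> \bar R) : (forall x, 0 <= f x) -> 0 <= lebRd f.
Proof.
elim: n f => [|n IH] f f0 /=; first exact: f0.
by apply: integral_ge0 => x _; apply: IH.
Qed.

Lemma lebRd0 n : lebRd (fun _ : n.-tuple R => 0) = 0.
Proof. by elim: n => [|n IH] //=; rewrite IH integral0. Qed.

Lemma le_lebRd n (f g : n.-tuple R -> \bar R) : (forall x, 0 <= f x) ->
  (forall x, f x <= g x) -> lebRd f <= lebRd g.
Proof.
elim: n f g => [|n IH] f g f0 fg /=; first exact: fg.
by apply: ge0_le_integralT => x; [exact: lebRd_ge0 | exact: IH].
Qed.

Lemma lebRd_prod_le n (K I : R) (f : nat -> R -> R) : (0 <= K)%R ->
  (forall j u, 0 <= f j u)%R -> (forall j, measurable_fun setT (f j)) ->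
  (forall j, \int[@lebesgue_measure R]_u (f j u)%:E <= I%:E) ->
  lebRd (fun x : n.-tuple R => (K * \prod_(j < n) f j (tnth x j))%:E) <= (K * I ^+ n)%:E.
Proof.
elim: n K f => [|n IH] K f K0 f0 mf fI /=; first by rewrite big_ord0 expr0.
have I0 : (0 <= I)%R.
  by rewrite -lee_fin; apply: le_trans (fI 0%N); apply: integral_ge0 => x _; rewrite lee_fin.
have KIn0 : (0 <= K * I ^+ n)%R by rewrite mulr_ge0 ?exprn_ge0.
have inner x : lebRd (fun t : n.-tuple R =>
      (K * \prod_(j < n.+1) f j (tnth (cons_tuple x t) j))%:E)
    <= (K * I ^+ n)%:E * (f 0%N x)%:E.
  have -> : (fun t : n.-tuple R => (K * \prod_(j < n.+1) f j (tnth (cons_tuple x t) j))%:E)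
      = (fun t => ((K * f 0%N x) * \prod_(j < n) f j.+1 (tnth t j))%:E).
    apply: funext => t; rewrite big_ord_recl mulrA.
    by congr (_ * _)%:E; apply: eq_bigr => j _; rewrite tnthS.
  apply: le_trans (IH _ (fun j => f j.+1) _ _ _ _) _ => //.
  - by rewrite mulr_ge0.
  - by rewrite -EFinM lee_fin mulrAC.
apply: (@le_trans _ _ (\int[lebesgue_measure]_x ((K * I ^+ n)%:E * (f 0%N x)%:E))).
  apply: ge0_le_integralT => [x|]; last exact: inner.
  by apply: lebRd_ge0 => t; rewrite lee_fin mulr_ge0// prodr_ge0.
have mf0 : measurable_fun setT (EFin \o f 0%N) by apply/measurable_EFinP.
rewrite ge0_integralZl//; last by move=> x _; rewrite lee_fin.
by rewrite exprSr mulrA (EFinM (K * I ^+ n)) lee_wpmul2l ?lee_fin.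
Qed.

End iterated_lebesgue_integral.

Section euclidean.
Context {R : realType}.

Definition tzero n : n.-tuple R := [tuple 0 | _ < n].

Lemma enorm_ge0 n (a : n.-tuple R) : 0 <= enorm a.
Proof. exact: sqrtr_ge0. Qed.

Lemma norm_tnth_le_enorm n (a : n.-tuple R) i : `|tnth a i| <= enorm a.
Proof.
rewrite /enorm -sqrtr_sqr ler_sqrt; last by rewrite sumr_ge0// => j _; rewrite sqr_ge0.
by rewrite (bigD1 i)//= lerDl sumr_ge0// => j _; rewrite sqr_ge0.
Qed.

Lemma enorm_le_sum_norm n (a : n.-tuple R) : enorm a <= \sum_(i < n) `|tnth a i|.
Proof.
have s0 : 0 <= \sum_(i < n) `|tnth a i| by rewrite sumr_ge0.
rewrite /enorm -(ger0_norm s0) -sqrtr_sqr ler_sqrt ?sqr_ge0//.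
rewrite expr2 mulr_suml; apply: ler_sum => i _.
rewrite -real_normK ?num_real// expr2 ler_wpM2l//.
by rewrite (bigD1 i)//= lerDl sumr_ge0.
Qed.

Lemma sum_norm_le_enorm n (a : n.-tuple R) : \sum_(i < n) `|tnth a i| <= n%:R * enorm a.
Proof.
rewrite mulr_natl -[n in _ *+ n]card_ord -sumr_const.
by apply: ler_sum => i _; exact: norm_tnth_le_enorm.
Qed.

Lemma tsub0 n (x : n.-tuple R) : tsub x (tzero n) = x.
Proof. by apply: eq_from_tnth => i; rewrite !tnth_mktuple subr0. Qed.

Lemma norm_dotp_le n (a b : n.-tuple R) (B : R) : (forall i, `|tnth a i| <= B) ->
  `|dotp a b| <= n%:R * B * enorm b.
Proof.
move=> aB; apply: le_trans (ler_norm_sum _ _ _) _.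
rewrite -mulrA mulr_natl -[n in _ *+ n]card_ord -sumr_const; apply: ler_sum => i _.
by rewrite normrM ler_pM// norm_tnth_le_enorm.
Qed.

Lemma norm_tnth_lipschitz_le n m (f : n.-tuple R -> m.-tuple R) (L : R) :
  (forall x y, enorm (tsub (f x) (f y)) <= L * enorm (tsub x y)) ->
  forall x i, `|tnth (f x) i| <= enorm (f (tzero n)) + `|L| * enorm x.
Proof.
move=> fL x i; rewrite -(subrK (tnth (f (tzero n)) i) (tnth (f x) i)) addrC.
apply: le_trans (ler_normD _ _) _; apply: lerD; first exact: norm_tnth_le_enorm.
have := norm_tnth_le_enorm (tsub (f x) (f (tzero n))) i; rewrite tnth_mktuple.
move=> /le_trans; apply; apply: le_trans (fL _ _) _.
by rewrite tsub0 ler_wpM2r ?enorm_ge0 ?ler_norm.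
Qed.

Lemma add1_sum_le_prod_add1 n (y : 'I_n -> R) : (forall i, 0 <= y i) ->
  1 + \sum_(i < n) y i <= \prod_(i < n) (1 + y i).
Proof.
elim: n y => [|n IH] y y0; first by rewrite !big_ord0 addr0.
rewrite big_ord_recr big_ord_recr /=.
have := IH (fun i => y (widen_ord (leqnSn n) i)) (fun i => y0 _).
set S := \sum_(i < n) _; set P := \prod_(i < n) _ => SP.
have P1 : 1 <= P by apply: le_trans SP; rewrite lerDl sumr_ge0.
rewrite mulrDr mulr1 addrA; apply: lerD => //.
by rewrite -[leLHS]mul1r ler_wpM2r.
Qed.

End euclidean.

Section gaussian.
Context {R : realType}.

Lemma gauss_pdf_prod n (m : n.-tuple R) (v : R) (x : n.-tuple R) :
  gauss_pdf m v x = (Num.sqrt (v * pi *+ 2))^-n *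
    \prod_(j < n) expR (- (tnth x j - tnth m j) ^+ 2 / (v *+ 2)).
Proof.
rewrite /gauss_pdf /enorm sqr_sqrtr; last by rewrite sumr_ge0// => j _; rewrite sqr_ge0.
rewrite -sumrN mulr_suml expR_sum; congr (_ * _); apply: eq_bigr => j _.
by rewrite tnth_mktuple.
Qed.

Lemma gauss_pdf_ge0 n (m : n.-tuple R) (v : R) (x : n.-tuple R) : 0 <= gauss_pdf m v x.
Proof. by rewrite mulr_ge0 ?invr_ge0 ?exprn_ge0 ?sqrtr_ge0 ?expR_ge0. Qed.

(* Junk value: the square root of a nonpositive number is [0], and [0^-1 = 0]. *)
Lemma gauss_pdf_nonpos_var n (m : n.-tuple R) (v : R) (x : n.-tuple R) :
  (0 < n)%N -> v <= 0 -> gauss_pdf m v x = 0.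
Proof.
move=> n0 v0; rewrite /gauss_pdf ler0_sqrtr; last first.
  by rewrite mulrn_wle0// mulr_le0_ge0// pi_ge0.
by rewrite expr0n gtn_eqF// invr0 mul0r.
Qed.

(* Half of the Gaussian decay absorbs the linear factor. *)
Lemma add1_norm_expR_le (v : R) (y : R) : 0 < v ->
  (1 + `|y|) * expR (- y ^+ 2 / (v *+ 2)) <= (2 + v *+ 4) * expR (- y ^+ 2 / (v *+ 4)).
Proof.
move=> v0; set E := expR (- y ^+ 2 / (v *+ 4)).
have E0 : 0 < E by apply: expR_gt0.
have -> : expR (- y ^+ 2 / (v *+ 2)) = E * E.
  by rewrite -expRD; congr expR; field; rewrite gt_eqF.
have E1 : E <= 1.
  by rewrite -expR0 ler_expR mulNr oppr_le0 divr_ge0 ?sqr_ge0// mulrn_wge0// ltW.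
have yE : y ^+ 2 * E <= v *+ 4.
  have v4 : 0 < v *+ 4 by rewrite pmulrn_lgt0.
  set z := y ^+ 2 / (v *+ 4).
  have Ez : E = (expR z)^-1 by rewrite /E mulNr expRN.
  have hz : z <= expR z by apply: le_trans (expR_ge1Dx z); rewrite lerDr.
  have -> : y ^+ 2 = z * v *+ 4 by rewrite -mulrnAr divfK ?gt_eqF.
  by rewrite Ez -mulrnAr ler_pdivrMr ?expR_gt0// [leRHS]mulrC ler_pM2r.
have hy : `|y| <= 1 + y ^+ 2.
  have [y1|y1] := lerP `|y| 1; first by apply: le_trans y1 _; rewrite lerDl sqr_ge0.
  by rewrite -real_normK ?num_real// expr2 ler_wpDl// ler_peMr// ltW.
rewrite mulrA ler_pM2r//; apply: (@le_trans _ _ ((2 + y ^+ 2) * E)).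
  by rewrite ler_pM2r//; lra.
by rewrite mulrDl lerD// -[leRHS]mulr1 ler_wpM2l.
Qed.

Definition gauss_moment_bound (v : R) : R :=
  (2 + v *+ 4) / normal_peak (Num.sqrt (v *+ 2)).

Lemma gauss_moment_bound_ge0 (v : R) : 0 < v -> 0 <= gauss_moment_bound v.
Proof. by move=> v0; rewrite divr_ge0 ?normal_peak_ge0// addr_ge0// mulrn_wge0// ltW. Qed.

Definition gauss_moment_fun (v m u : R) : R :=
  (1 + `|u - m|) * expR (- (u - m) ^+ 2 / (v *+ 2)).

Lemma gauss_moment_fun_ge0 (v m u : R) : 0 <= gauss_moment_fun v m u.
Proof. by rewrite mulr_ge0 ?expR_ge0// addr_ge0. Qed.

Lemma measurable_gauss_moment_fun (v m : R) : measurable_fun setT (gauss_moment_fun v m).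
Proof.
apply: measurable_funM.
  by apply: measurable_funD => //; apply: measurableT_comp => //; exact: measurable_funB.
apply: measurableT_comp => //; apply: measurable_funM => //.
by apply: measurableT_comp => //; apply: measurable_funX; exact: measurable_funB.
Qed.

Lemma integral_gauss_moment_fun_le (v m : R) : 0 < v ->
  (\int[@lebesgue_measure R]_u (gauss_moment_fun v m u)%:E
    <= (gauss_moment_bound v)%:E)%E.
Proof.
move=> v0; set s := Num.sqrt (v *+ 2).
have s0 : s != 0 by rewrite gt_eqF// sqrtr_gt0 pmulrn_lgt0.
have pk : normal_peak s != 0 by rewrite gt_eqF// normal_peak_gt0.
have nf u : normal_fun m s u = expR (- (u - m) ^+ 2 / (v *+ 4)).
  by rewrite /normal_fun sqr_sqrtr ?mulrn_wge0 ?ltW// -mulrnA.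
apply: (@le_trans _ _ (\int[@lebesgue_measure R]_u ((2 + v *+ 4) * normal_fun m s u)%:E)%E).
  apply: ge0_le_integralT => u; first by rewrite lee_fin gauss_moment_fun_ge0.
  by rewrite lee_fin nf add1_norm_expR_le.
have -> : (fun u => ((2 + v *+ 4) * normal_fun m s u)%:E) =
    (fun u => (gauss_moment_bound v)%:E * (normal_pdf m s u)%:E)%E.
  by apply: funext => u; rewrite normal_pdfE// -EFinM mulrA divfK.
rewrite integralZl//; last exact: integrable_normal_pdf.
by rewrite integral_normal_pdf mule1.
Qed.

End gaussian.

Section gauss_lipschitz.
Context {R : realType} (d k : nat) (zeta : d.-tuple R -> k.-tuple R) (L : R).
Hypothesis zetaL : forall x y, enorm (tsub (zeta x) (zeta y)) <= L * enorm (tsub x y).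

Let offset (m : d.-tuple R) := enorm (zeta (tzero d)) + `|L| * \sum_(j < d) `|tnth m j|.

Lemma gauss_dotp_le (v : R) (m x : d.-tuple R) (w : k.-tuple R) :
  gauss_pdf m v x * `|dotp (zeta x) w| <=
  (Num.sqrt (v * pi *+ 2))^-d * (k%:R * enorm w * (offset m + `|L|)) *
    \prod_(j < d) gauss_moment_fun v (tnth m j) (tnth x j).
Proof.
set A := offset m; set S := \sum_(j < d) `|tnth x j - tnth m j|.
have S0 : 0 <= S by rewrite sumr_ge0.
have A0 : 0 <= A by rewrite addr_ge0 ?enorm_ge0// mulr_ge0// sumr_ge0.
have enorm_x : enorm x <= S + \sum_(j < d) `|tnth m j|.
  apply: le_trans (enorm_le_sum_norm x) _; rewrite -big_split; apply: ler_sum => j _.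
  by rewrite -{1}(subrK (tnth m j) (tnth x j)) ler_normD.
have zeta_x i : `|tnth (zeta x) i| <= A + `|L| * S.
  apply: le_trans (norm_tnth_lipschitz_le zetaL x i) _.
  by rewrite /A /offset -addrA lerD2l -mulrDr addrC ler_wpM2l.
have AS : A + `|L| * S <= (A + `|L|) * \prod_(j < d) (1 + `|tnth x j - tnth m j|).
  apply: le_trans (_ : (A + `|L|) * (1 + S) <= _).
    by rewrite mulrDr mulr1 mulrDl; have := mulr_ge0 A0 S0; have := normr_ge0 L; lra.
  apply: ler_wpM2l; first exact: addr_ge0.
  exact: add1_sum_le_prod_add1.
rewrite gauss_pdf_prod /gauss_moment_fun big_split /=.
set c := _ ^- d; set PE := \prod_(j < d) expR _; set P1 := \prod_(j < d) (1 + _).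
have -> : c * (k%:R * enorm w * (A + `|L|)) * (P1 * PE) =
    c * PE * (k%:R * ((A + `|L|) * P1) * enorm w) by ring.
apply: ler_wpM2l.
  by rewrite mulr_ge0 ?invr_ge0 ?exprn_ge0 ?sqrtr_ge0 ?prodr_ge0 // => j _; rewrite expR_ge0.
apply: le_trans (norm_dotp_le _ zeta_x) _.
by rewrite ler_wpM2r ?enorm_ge0// ler_wpM2l.
Qed.

Lemma lebRd_gauss_dotp_le (v : R) (m : d.-tuple R) (w : k.-tuple R) : 0 < v ->
  (lebRd (fun x => (gauss_pdf m v x * `|dotp (zeta x) w|)%:E) <=
  ((Num.sqrt (v * pi *+ 2))^-d * (k%:R * enorm w * (offset m + `|L|)) *
     gauss_moment_bound v ^+ d)%:E)%E.
Proof.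
move=> v0; have A0 : 0 <= offset m by rewrite addr_ge0 ?enorm_ge0// mulr_ge0// sumr_ge0.
set K := (Num.sqrt (v * pi *+ 2))^-d * (k%:R * enorm w * (offset m + `|L|)).
have K0 : 0 <= K.
  by rewrite mulr_ge0 ?invr_ge0 ?exprn_ge0 ?sqrtr_ge0// !mulr_ge0 ?enorm_ge0// addr_ge0.
apply: (le_trans (y := lebRd (fun x : d.-tuple R =>
  (K * \prod_(j < d) gauss_moment_fun v (nth 0 m j) (tnth x j))%:E))); last first.
  apply: (@lebRd_prod_le _ d K _ (fun j => gauss_moment_fun v (nth 0 m j))) => // j.
  - by move=> u; exact: gauss_moment_fun_ge0.
  - exact: measurable_gauss_moment_fun.
  - exact: integral_gauss_moment_fun_le.
apply: le_lebRd => x; first by rewrite lee_fin mulr_ge0 ?gauss_pdf_ge0.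
rewrite lee_fin (eq_bigr (fun j => gauss_moment_fun v (tnth m j) (tnth x j))) => [|j _].
  exact: gauss_dotp_le.
by rewrite !(tnth_nth 0).
Qed.

Lemma lebRd_gauss_dotp_affine (v s : R) : (0 < d)%N ->
  exists a b, [/\ 0 <= a, 0 <= b & forall x0 w,
    (lebRd (fun x => (gauss_pdf (tscale s x0) v x * `|dotp (zeta x) w|)%:E)
      <= ((a + b * enorm x0) * enorm w)%:E)%E].
Proof.
move=> d_gt0; have [v_le0|v0] := lerP v 0.
  exists 0, 0; split=> // x0 w; rewrite mul0r addr0 mul0r.
  apply: (le_trans (y := lebRd (fun _ : d.-tuple R => 0%E))); last by rewrite lebRd0.
  by apply: le_lebRd => x; rewrite gauss_pdf_nonpos_var ?mul0r.
set C := (Num.sqrt (v * pi *+ 2))^-d * k%:R * gauss_moment_bound v ^+ d.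
have C0 : 0 <= C.
  by rewrite !mulr_ge0 ?invr_ge0 ?exprn_ge0 ?sqrtr_ge0 ?gauss_moment_bound_ge0.
exists (C * (enorm (zeta (tzero d)) + `|L|)), (C * (`|L| * (`|s| * d%:R))).
have b0 : 0 <= `|L| * (`|s| * d%:R) by rewrite !mulr_ge0 ?normr_ge0 ?ler0n.
split; [exact: mulr_ge0 C0 (addr_ge0 (enorm_ge0 _) (normr_ge0 _)) |
        exact: mulr_ge0 C0 b0 | move=> x0 w].
apply: (le_trans (lebRd_gauss_dotp_le _ w v0)); rewrite lee_fin /offset.
have sum_m : \sum_(j < d) `|tnth (tscale s x0) j| <= `|s| * (d%:R * enorm x0).
  under eq_bigr => j _ do rewrite tnth_map normrM.
  by rewrite -mulr_sumr ler_wpM2l// sum_norm_le_enorm.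
set Z := enorm (zeta (tzero d)); set S := \sum_(j < d) _.
have -> : (Num.sqrt (v * pi *+ 2))^-d * (k%:R * enorm w * (Z + `|L| * S + `|L|)) *
    gauss_moment_bound v ^+ d = C * enorm w * (Z + `|L| + `|L| * S) by rewrite /C; ring.
have -> : (C * (Z + `|L|) + C * (`|L| * (`|s| * d%:R)) * enorm x0) * enorm w =
    C * enorm w * (Z + `|L| + `|L| * (`|s| * (d%:R * enorm x0))) by ring.
apply: ler_wpM2l; first by rewrite mulr_ge0 ?enorm_ge0.
by rewrite lerD2l ler_wpM2l.
Qed.

End gauss_lipschitz.

Section tuple_measurability.
Context {R : realType}.

Lemma measurable_enorm n : measurable_fun setT (@enorm R n).
Proof.
apply: (measurableT_comp (continuous_measurable_fun (@sqrt_continuous R))).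
by apply: measurable_sum => i; apply: measurable_funX; exact: measurable_tnth.
Qed.

Lemma measurable_emap n (g : R -> R) : measurable_fun setT g ->
  measurable_fun setT (@emap R n g).
Proof.
move=> mg; apply/measurable_fun_tnthP => i.
have -> : (tnth (T:=R))^~ i \o emap g = g \o (tnth (T:=R))^~ i.
  by apply: funext => x /=; rewrite /emap tnth_map.
exact: measurableT_comp mg (measurable_tnth i).
Qed.

Lemma measurable_in_pow n (Theta : set R) : measurable Theta ->
  measurable (in_pow n Theta).
Proof.
move=> mTheta.
have -> : in_pow n Theta = \bigcap_(i in [set: 'I_n]) ((tnth (T:=R))^~ i @^-1` Theta).
  by apply/seteqP; split => x /= + i => [/(_ i)|/(_ i I)].
apply: fin_bigcap_measurable; first exact: finite_finset.
by move=> i _; rewrite -[X in measurable X]setTI; exact: measurable_tnth.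
Qed.

End tuple_measurability.

Lemma emap_inv_on (R : realType) n (Theta : set R) (g : R -> R) (th : n.-tuple R) :
  {in Theta &, injective g} -> in_pow n Theta th ->
  emap (inv_on Theta g) (emap g th) = th.
Proof.
move=> ginj Th; apply: eq_from_tnth => i; rewrite /emap !tnth_map.
apply: xget_unique; first by split => //; exact: Th.
by move=> y [Thy gy]; apply: ginj; rewrite ?inE.
Qed.

Section pushforward_moment.
Local Open Scope ereal_scope.
Context {R : realType} (d k : nat) (Theta : set R) (g : R -> R)
  (mu : {measure set (d.-tuple R) -> \bar R}) (T : d.-tuple R -> k.-tuple R).
Hypotheses (mTheta : measurable Theta) (mg : measurable_fun setT g).
Hypotheses (ginj : {in Theta &, injective g}) (muTheta : {ae mu, forall th, in_pow d Theta th}).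
Hypothesis mT : measurable_fun (in_pow d Theta) T.
Hypothesis T_int : \int[mu]_th (enorm (T th))%:E < +oo.
Hypothesis gT_int : \int[mu]_th (enorm (emap g th) * enorm (T th))%:E < +oo.

Lemma affine_moment_lt (a b : R) (h : d.-tuple R -> R) : (0 <= a)%R -> (0 <= b)%R ->
  measurable_fun setT h -> (forall th, 0 <= h th <= enorm (T th))%R ->
  \int[mu]_th ((a + b * enorm (emap g th)) * h th)%:E < +oo.
Proof.
move=> a0 b0 mh hT; have h0 th : (0 <= h th)%R by case/andP: (hT th).
have mgn : measurable_fun setT (fun th : d.-tuple R => enorm (emap g th)).
  by apply: measurableT_comp (measurable_emap mg); exact: measurable_enorm.
under eq_integral do rewrite mulrDl -mulrA EFinD !EFinM.
rewrite ge0_integralD//; last 4 first.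
- by move=> th _; rewrite mule_ge0 ?lee_fin.
- by apply: emeasurable_funM => //; apply/measurable_EFinP.
- by move=> th _; rewrite mule_ge0 ?lee_fin ?mulr_ge0 ?enorm_ge0.
- by apply: emeasurable_funM => //; apply/measurable_EFinP; exact: measurable_funM.
rewrite !ge0_integralZl//; last 4 first.
- by apply/measurable_EFinP; exact: measurable_funM.
- by move=> th _; rewrite lee_fin mulr_ge0 ?enorm_ge0.
- by apply/measurable_EFinP.
- by move=> th _; rewrite lee_fin.
apply: lte_add_pinfty; apply: lte_mul_pinfty; rewrite ?lee_fin//.
- apply: le_lt_trans T_int; apply: ge0_le_integralT => th; rewrite lee_fin.
    exact: h0.
  by case/andP: (hT th).
- apply: le_lt_trans gT_int; apply: ge0_le_integralT => th; rewrite -EFinM lee_fin.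
    by rewrite mulr_ge0 ?enorm_ge0.
  by rewrite ler_wpM2l ?enorm_ge0//; case/andP: (hT th).
Qed.

Lemma pushforward_affine_moment_lt (a b : R) : (0 <= a)%R -> (0 <= b)%R ->
  \int[pushforward mu (emap g)]_x0
    ((a + b * enorm x0) * enorm (T (emap (inv_on Theta g) x0)))%:E < +oo.
Proof.
(* [T] is only measurable on [Theta^d], hence the restriction. *)
move=> a0 b0; set Tp := (fun th => enorm (T th)) \_ (in_pow d Theta).
have Tp_T th : (0 <= Tp th <= enorm (T th))%R.
  by rewrite /Tp patchE; case: ifP => _; rewrite ?lexx enorm_ge0.
have mTp : measurable_fun setT Tp.
  rewrite /Tp; apply/(measurable_restrictT _ (measurable_in_pow mTheta)).
  by apply: measurableT_comp mT; exact: measurable_enorm.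
have affine0 (x : d.-tuple R) c : (0 <= c)%R -> (0 <= (a + b * enorm x) * c)%R.
  by move=> c0; rewrite mulr_ge0 ?addr_ge0 ?mulr_ge0 ?enorm_ge0.
apply: (@le_lt_trans _ _ (\int[mu]_th
    ((a + b * enorm (emap g th)) * enorm (T (emap (inv_on Theta g) (emap g th))))%:E)).
  apply: ge0_integral_pushforward_le => [|x0]; first exact: measurable_emap.
  by rewrite lee_fin affine0 ?enorm_ge0.
apply: le_lt_trans (affine_moment_lt a0 b0 mTp Tp_T).
apply: ae_ge0_le_integralT => [th|th|]; rewrite ?lee_fin ?affine0 ?enorm_ge0//.
  by case/andP: (Tp_T th).
apply: filterS muTheta => th Th.
by rewrite emap_inv_on// /Tp patchE mem_set.
Qed.

End pushforward_moment.

Theorem lemmaI1 (R : realType) (d k : nat) (Theta : set R) (g : R -> R)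
  (P : probability (d.-tuple R) R) (beta : R -> R) (eps : R)
  (T : d.-tuple R -> k.-tuple R) (zeta : d.-tuple R -> k.-tuple R) :
  (1 <= d)%N ->
  measurable Theta ->
  measurable_fun setT g ->
  (forall th, Theta th -> derivable g th 1) ->
  {within Theta, continuous (derive1 g)} ->
  {in Theta &, injective g} ->
  (forall th, Theta th -> (derive1 g) th != 0) ->
  {ae P, forall th, in_pow d Theta th} ->
  measurable_fun setT beta ->
  (forall s, 0 < beta s) ->
  (@lebesgue_measure R).-integrable `[0, 1] (EFin \o beta) ->
  0 < eps ->
  measurable_fun (in_pow d Theta) T ->
  lipschitz_fun zeta ->
  (\int[P]_th (enorm (T th))%:E < +oo)%E ->
  (\int[P]_th (enorm (emap g th) * enorm (T th))%:E < +oo)%E ->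
  forall t, eps <= t <= 1 ->
  (\int[pushforward P (emap g)]_x0
     lebRd (fun xt => (gauss_pdf (tscale (Num.sqrt (alpha_t beta t)) x0)
                                 (v_t beta t) xt
                       * `| dotp (zeta xt) (T (emap (inv_on Theta g) x0)) |)%:E)
   < +oo)%E.
Proof.
move=> d_gt0 mTheta mg _ _ ginj _ PTheta _ _ _ _ mT [L zetaL] T_int gT_int t _.
have [a [b [a0 b0 inner]]] :=
  lebRd_gauss_dotp_affine zetaL (v_t beta t) (Num.sqrt (alpha_t beta t)) d_gt0.
apply: le_lt_trans (pushforward_affine_moment_lt mTheta mg ginj PTheta mT T_int gT_int a0 b0).
apply: ge0_le_integralT => [|x0|x0]; last exact: inner.
- exact: measurable_emap.
- by apply: lebRd_ge0 => xt; rewrite lee_fin mulr_ge0 ?gauss_pdf_ge0.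
Qed.
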